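(* Let $\bar x\in\Phi$ be a local second-order weak sharp minimizer of problem (P) with corresponding constants $\kappa>0$ and $\delta>0$. Then for any $\varepsilon\in[0,1/2)$, every $x\in S\cap B_\delta(\bar x)$, every $d\in C(x)\cap N^{P,\varepsilon}_S(x)$, and every $\lambda\in\mathbb{R}^m$ with $\nabla_x L(x,\lambda)=0$, one has (i) $\sigma_{\nabla g(x)(T''_\Phi(x;d))}(\lambda)\le 0$; (ii) $\nabla^2_{xx}L(x,\lambda)(d,d)-\sigma_{\nabla g(x)(T^2_\Phi(x;d))+\nabla^2 g(x)(d,d)}(\lambda)\ge 2\kappa(1-2\varepsilon)^2\|d\|^2$.
   Context: Standing setting: $f:\mathbb{R}^n\to\mathbb{R}$ and $g:\mathbb{R}^n\to\mathbb{R}^m$ are twice continuously differentiable, $K\subset\mathbb{R}^m$ is closed, and (P) is the problem $\min f(x)$ s.t. $g(x)\in K$. $\Phi:=\{x\in\mathbb{R}^n: g(x)\in K\}$ is the feasible set and $S$ is the (nonempty) set of optimal solutions of (P). $L(x,\lambda):=f(x)+\langle g(x),\lambda\rangle$. $B_\delta(x)$ is the ball of radius $\delta$ centered at $x$. A point $\bar x\in\Phi$ is a local second-order weak sharp minimizer of (P) with constants $\kappa,\delta>0$ if $f(x)\ge f(\bar x)+\kappa[\mathrm{dist}(x,S)]^2$ for all $x\in\Phi\cap B_\delta(\bar x)$. For a closed set $A$ and $\bar x\in A$: the tangent cone is $T_A(\bar x):=\{d:\exists t_k\downarrow0,d_k\to d,\ \bar x+t_kd_k\in A\}$; the outer second-order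 tangent set in direction $d\in T_A(\bar x)$ is $T^2_A(\bar x;d):=\{w:\exists t_k\downarrow0,w_k\to w,\ \bar x+t_kd+\tfrac12t_k^2w_k\in A\}$; the asymptotic second-order tangent cone is $T''_A(\bar x;d):=\{w:\exists (t_k,r_k)\downarrow(0,0)\text{ with } t_k/r_k\to0,\ w_k\to w,\ \bar x+t_kd+\tfrac12t_kr_kw_k\in A\}$. The critical cone at a feasible $x$ is $C(x):=\{d:\nabla g(x)d\in T_K(g(x)),\ \nabla f(x)d\le0\}$. The proximal normal cone is $N^P_A(\bar x):=\{v:\exists\tau>0 \text{ such that } \bar x \text{ is a nearest point of } A \text{ to } \bar x+\tau v\}$, and for $\varepsilon\ge0$ the $\varepsilon$-proximal normal cone is $N^{P,\varepsilon}_A(\bar x):=\{v:\mathrm{dist}(v,N^P_A(\bar x))\le\varepsilon\|v\|\}$. $\sigma_A(\lambda):=\sup_{u\in A}\langle\lambda,u\rangle$ (equal to $-\infty$ if $A=\emptyset$). $\nabla g(x)\in\mathbb{R}^{m\times n}$ is the Jacobian, $\nabla^2g(x)(d,d):=(d^T\nabla^2g_1(x)d,\dots,d^T\nabla^2g_m(x)d)$, and for a set $A\subset\mathbb{R}^n$, $\nabla g(x)(A):=\{\nabla g(x)u:u\in A\}$. *)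

From HB Require Import structures.
From mathcomp Require Import all_boot all_order all_algebra.
From mathcomp Require Import all_classical all_reals all_analysis.
Set Implicit Arguments. Unset Strict Implicit. Unset Printing Implicit Defensive.
Import Order.TTheory GRing.Theory Num.Theory.
Import numFieldNormedType.Exports.
Local Open Scope classical_set_scope.
Local Open Scope ring_scope.

Section Defs.
Variable R : realType.

Definition dotv (n : nat) (u v : 'cV[R]_n) : R := \sum_(i < n) u i 0 * v i 0.
Definition enorm (n : nat) (u : 'cV[R]_n) : R := Num.sqrt (dotv u u).

Definition dist (n : nat) (x : 'cV[R]_n) (A : set 'cV[R]_n) : R :=
  inf [set enorm (x - a) | a in A].

Definition Eball (n : nat) (x : 'cV[R]_n) (delta : R) : set 'cV[R]_n :=
  [set y | enorm (y - x) < delta].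

Definition vcvg (n : nat) (u : nat -> 'cV[R]_n) (l : 'cV[R]_n) : Prop :=
  forall e : R, 0 < e -> exists N : nat, forall k, (N <= k)%N -> enorm (u k - l) < e.

Definition rcvg0 (t : nat -> R) : Prop :=
  forall e : R, 0 < e -> exists N : nat, forall k, (N <= k)%N -> `|t k| < e.

(* t_k "decreases" to 0: positive terms converging to 0 *)
Definition pos_to0 (t : nat -> R) : Prop := (forall k, 0 < t k) /\ rcvg0 t.

Definition quad (n : nat) (H : 'M[R]_n) (d : 'cV[R]_n) : R := (d^T *m H *m d) 0 0.

Definition C2_with (n : nat) (F : 'cV[R]_n -> R) (gF : 'cV[R]_n -> 'cV[R]_n)
    (hF : 'cV[R]_n -> 'M[R]_n) : Prop :=
  [/\ (forall x e, 0 < e -> exists2 r, 0 < r & forall y, enorm (y - x) < r ->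
          `|F y - F x - dotv (gF x) (y - x)| <= e * enorm (y - x)),
      (forall x e, 0 < e -> exists2 r, 0 < r & forall y, enorm (y - x) < r ->
          enorm (gF y - gF x - hF x *m (y - x)) <= e * enorm (y - x)) &
      (forall x e, 0 < e -> exists2 r, 0 < r & forall y, enorm (y - x) < r ->
          forall i j, `|hF y i j - hF x i j| < e)].

Definition tangent_cone (n : nat) (A : set 'cV[R]_n) (x : 'cV[R]_n) : set 'cV[R]_n :=
  [set d | exists (t : nat -> R) (dk : nat -> 'cV[R]_n),
     [/\ pos_to0 t, vcvg dk d & forall k, A (x + t k *: dk k)]].

Definition tangent2 (n : nat) (A : set 'cV[R]_n) (x d : 'cV[R]_n) : set 'cV[R]_n :=
  [set w | exists (t : nat -> R) (wk : nat -> 'cV[R]_n),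
     [/\ pos_to0 t, vcvg wk w &
         forall k, A (x + t k *: d + (2^-1 * t k ^+ 2) *: wk k)]].

Definition tangent2_asym (n : nat) (A : set 'cV[R]_n) (x d : 'cV[R]_n) : set 'cV[R]_n :=
  [set w | exists (t r : nat -> R) (wk : nat -> 'cV[R]_n),
     [/\ pos_to0 t, pos_to0 r, rcvg0 (fun k => t k / r k), vcvg wk w &
         forall k, A (x + t k *: d + (2^-1 * t k * r k) *: wk k)]].

Definition prox_normal (n : nat) (A : set 'cV[R]_n) (x : 'cV[R]_n) : set 'cV[R]_n :=
  [set v | exists2 tau : R, 0 < tau &
     forall a, A a -> enorm (x + tau *: v - x) <= enorm (x + tau *: v - a)].

Definition eps_prox_normal (n : nat) (eps : R) (A : set 'cV[R]_n) (x : 'cV[R]_n)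
    : set 'cV[R]_n :=
  [set v | dist v (prox_normal A x) <= eps * enorm v].

(* support function sigma_A(lambda) = sup_{u in A} <lambda, u>  (= -oo if A empty) *)
Definition support_fun (m : nat) (A : set 'cV[R]_m) (lam : 'cV[R]_m) : \bar R :=
  ereal_sup [set (dotv lam u)%:E | u in A].

End Defs.

(* Both parts come from a second-order expansion of f along the curves that
   define the tangent sets.  If y_k = x + t_k d + s_k w_k with w_k -> w,
   t_k -> 0, s_k > 0, s_k -> 0 and t_k^2 / s_k -> c, then
     (f y_k - f x - t_k <grad f x, d>) / s_k  -->  <grad f x, w> + c/2 <d, Hf d>.
   For T''_Phi(x;d) one has c = 0, and minimality of x on Phi gives
   <grad f x, w> >= 0.  For T^2_Phi(x;d) one has c = 2, and the weak sharp
   minimum bounds the quotient below by 2 kappa (dist(y_k, S) / t_k)^2; since d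
   lies within eps |d| of a proximal normal v, dist(y_k, S) >= t_k |v| - o(t_k)
   >= t_k (1 - 2 eps) |d| - o(t_k).  At a KKT multiplier, <lam, Jg x w> =
   -<grad f x, w>, which turns both bounds into the support-function
   inequalities; the constraint data enter only through Phi. *)
From HB Require Import structures.
From mathcomp Require Import all_boot all_order all_algebra.
From mathcomp Require Import all_classical all_reals all_analysis.
From mathcomp Require Import ring lra.
Import Order.TTheory GRing.Theory Num.Theory.
Import numFieldNormedType.Exports.
Local Open Scope classical_set_scope.
Local Open Scope ring_scope.

Set Implicit Arguments. Unset Strict Implicit. Unset Printing Implicit Defensive.

Section Euclidean.
Variables (R : realType) (n : nat).
Implicit Types (u v w : 'cV[R]_n) (H : 'M[R]_n).

Lemma dotvE u v : dotv u v = (u^T *m v) 0 0.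
Proof. by rewrite mxE; apply: eq_bigr => i _; rewrite mxE. Qed.

Lemma dotvC u v : dotv u v = dotv v u.
Proof. by apply: eq_bigr => i _; rewrite mulrC. Qed.

Lemma dotvDr u v w : dotv u (v + w) = dotv u v + dotv u w.
Proof. by rewrite /dotv -big_split; apply: eq_bigr => i _; rewrite mxE mulrDr. Qed.

Lemma dotvZr a u v : dotv u (a *: v) = a * dotv u v.
Proof. by rewrite /dotv mulr_sumr; apply: eq_bigr => i _; rewrite mxE mulrCA. Qed.

Lemma dotvDl u v w : dotv (u + v) w = dotv u w + dotv v w.
Proof. by rewrite dotvC dotvDr !(dotvC w). Qed.

Lemma dotvZl a u v : dotv (a *: u) v = a * dotv u v.
Proof. by rewrite dotvC dotvZr dotvC. Qed.

Lemma dotvBr u v w : dotv u (v - w) = dotv u v - dotv u w.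
Proof. by rewrite -scaleN1r dotvDr dotvZr mulN1r. Qed.

Lemma dotvBl u v w : dotv (u - v) w = dotv u w - dotv v w.
Proof. by rewrite dotvC dotvBr !(dotvC w). Qed.

Lemma dotv_ge0 u : 0 <= dotv u u.
Proof. by apply: sumr_ge0 => i _; rewrite -expr2 sqr_ge0. Qed.

Lemma dotv_eq0 u : dotv u u = 0 -> u = 0.
Proof.
move/eqP; rewrite psumr_eq0 => [/allP u0|i _]; last by rewrite -expr2 sqr_ge0.
apply/matrixP => i j; rewrite (ord1 j) mxE.
by have /implyP/(_ isT) := u0 i (mem_index_enum i); rewrite mulf_eq0 orbb => /eqP.
Qed.

Lemma dotv0r u : dotv u 0 = 0.
Proof. by rewrite -(scale0r 0) dotvZr mul0r. Qed.

Lemma Cauchy_Schwarz u v : dotv u v ^+ 2 <= dotv u u * dotv v v.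
Proof.
have [/dotv_eq0 ->|vv0] := eqVneq (dotv v v) 0; first by rewrite dotv0r expr0n /= dotv0r mulr0.
have vv : 0 < dotv v v by rewrite lt_def vv0 dotv_ge0.
have := dotv_ge0 (dotv v v *: u - dotv u v *: v).
rewrite !(dotvBl, dotvBr, dotvZl, dotvZr) (dotvC v u) => h.
have : 0 <= dotv v v * (dotv u u * dotv v v - dotv u v ^+ 2) by nra.
by rewrite pmulr_rge0 // subr_ge0.
Qed.

Lemma enorm_ge0 u : 0 <= enorm u.
Proof. exact: sqrtr_ge0. Qed.

Lemma enorm_sq u : enorm u ^+ 2 = dotv u u.
Proof. by rewrite sqr_sqrtr // dotv_ge0. Qed.

Lemma dotv_norm_le u v : `|dotv u v| <= enorm u * enorm v.
Proof.
rewrite /enorm -sqrtrM ?dotv_ge0 // -sqrtr_sqr.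
exact/ler_wsqrtr/Cauchy_Schwarz.
Qed.

Lemma dotv_le u v : dotv u v <= enorm u * enorm v.
Proof. exact/ler_normlW/dotv_norm_le. Qed.

Lemma enormD u v : enorm (u + v) <= enorm u + enorm v.
Proof.
rewrite -(ler_pXn2r (_ : (0 < 2)%N)) ?nnegrE ?addr_ge0 ?enorm_ge0 //.
rewrite enorm_sq sqrrD !enorm_sq dotvDl !dotvDr (dotvC v u).
by have := dotv_le u v; lra.
Qed.

Lemma enormZ a u : enorm (a *: u) = `|a| * enorm u.
Proof. by rewrite /enorm dotvZl dotvZr mulrA -expr2 sqrtrM ?sqr_ge0 // sqrtr_sqr. Qed.

Lemma enormN u : enorm (- u) = enorm u.
Proof. by rewrite -scaleN1r enormZ normrN1 mul1r. Qed.

Lemma enormB u v : enorm u - enorm v <= enorm (u - v).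
Proof. by have := enormD (u - v) v; rewrite subrK; lra. Qed.

Lemma enorm_coord u i : `|u i 0| <= enorm u.
Proof.
rewrite -sqrtr_sqr; apply: ler_wsqrtr; rewrite /dotv (bigD1 i) //= expr2 lerDl.
by apply: sumr_ge0 => j _; rewrite -expr2 sqr_ge0.
Qed.

Lemma quadE H u : quad H u = dotv u (H *m u).
Proof. by rewrite dotvE mulmxA. Qed.

Lemma quad_comb H a b u v : quad H (a *: u + b *: v) =
  a ^+ 2 * quad H u + a * b * (dotv u (H *m v) + dotv v (H *m u)) + b ^+ 2 * quad H v.
Proof.
rewrite !quadE mulmxDr -!scalemxAr !(dotvDl, dotvDr, dotvZl, dotvZr); ring.
Qed.

End Euclidean.

Lemma dotv_trmx (R : realType) m n (A : 'M[R]_(m, n)) (l : 'cV[R]_m) (w : 'cV[R]_n) :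
  dotv l (A *m w) = dotv (A^T *m l) w.
Proof. by rewrite !dotvE trmx_mul trmxK mulmxA. Qed.

Section Sequences.
Variable R : realType.
Implicit Types (t a b : nat -> R).

Lemma cvg_sumr (I : Type) (r : seq I) (u : I -> nat -> R) (l : I -> R) :
  (forall i, u i k @[k --> \oo] --> l i) ->
  \sum_(i <- r) u i k @[k --> \oo] --> \sum_(i <- r) l i.
Proof.
move=> ul; elim: r => [|i r IHr].
  by under eq_fun do rewrite big_nil; rewrite big_nil; exact: cvg_cst.
by under eq_fun do rewrite big_cons; rewrite big_cons; exact: cvgD.
Qed.

Lemma rcvg0_cvg t : rcvg0 t -> t k @[k --> \oo] --> 0.
Proof.
move=> t0; apply/cvgrPdist_lt => e /t0[N tN].
by exists N => // k /tN; rewrite sub0r normrN.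
Qed.

Lemma vcvg_near n (u : nat -> 'cV[R]_n) l e :
  vcvg u l -> 0 < e -> \forall k \near \oo, enorm (u k - l) < e.
Proof. by move=> ul /ul[N uN]; exists N. Qed.

Lemma vcvg_coord n (u : nat -> 'cV[R]_n) l :
  vcvg u l -> forall i, u k i 0 @[k --> \oo] --> l i 0.
Proof.
move=> ul i; apply/cvgrPdist_lt => e e0; near=> k.
rewrite (_ : l i 0 - u k i 0 = - (u k - l) i 0) ?normrN; last by rewrite !mxE opprB.
by apply: le_lt_trans (enorm_coord _ _) _; near: k; exact: vcvg_near.
Unshelve. all: by end_near. Qed.

Lemma cvg_dotv n (u v : nat -> 'cV[R]_n) (p q : 'cV[R]_n) :
  (forall i, u k i 0 @[k --> \oo] --> p i 0) ->
  (forall i, v k i 0 @[k --> \oo] --> q i 0) ->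
  dotv (u k) (v k) @[k --> \oo] --> dotv p q.
Proof. by move=> up vq; apply: cvg_sumr => i; exact: cvgM. Qed.

Lemma cvg_mulmx m n (A : 'M[R]_(m, n)) (u : nat -> 'cV[R]_n) (p : 'cV[R]_n) :
  (forall j, u k j 0 @[k --> \oo] --> p j 0) ->
  forall i, (A *m u k) i 0 @[k --> \oo] --> (A *m p) i 0.
Proof.
move=> up i; under eq_fun do rewrite mxE; rewrite mxE.
by apply: cvg_sumr => j; apply: cvgM => //; exact: cvg_cst.
Qed.

Lemma cvg_dominated0 a b (l : R) : b k @[k --> \oo] --> l ->
  (forall e, 0 < e -> \forall k \near \oo, `|a k| <= e * b k) ->
  a k @[k --> \oo] --> 0.
Proof.
move=> bl adom; apply/cvgr0Pnorm_le => e e0.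
have l1 : 0 < `|l| + 1 by rewrite ltr_pwDr ?normr_ge0.
near=> k.
apply: (le_trans (_ : _ <= e / (`|l| + 1) * b k)).
  by near: k; apply: adom; rewrite divr_gt0.
rewrite -[leRHS]mulr1 -mulrA ler_wpM2l ?(ltW e0) // mulrC ler_pdivrMr // mul1r.
apply: le_trans (ler_norm _) _; near: k.
by apply: cvgr_le; first exact: (cvg_norm bl); rewrite ltrDl.
Unshelve. all: by end_near. Qed.

Lemma cvg_half_sqr0 t : t k @[k --> \oo] --> 0 -> 2^-1 * t k ^+ 2 @[k --> \oo] --> 0.
Proof.
move=> t0; rewrite -(mulr0 (2^-1 * 0)); apply: (cvg_trans _ (cvgM (cvgM (cvg_cst _) t0) t0)).
by apply: near_eq_cvg; near=> k; rewrite /GRing.mul_fun /= expr2 mulrA.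
Unshelve. all: by end_near. Qed.

Lemma cvg_sqr_enorm_comb_ratio n (d w : 'cV[R]_n) (t s : nat -> R) (wk : nat -> 'cV[R]_n) (c : R) :
  t k @[k --> \oo] --> 0 -> (forall k, 0 < s k) -> s k @[k --> \oo] --> 0 ->
  t k ^+ 2 / s k @[k --> \oo] --> c -> vcvg wk w ->
  enorm (t k *: d + s k *: wk k) ^+ 2 / s k @[k --> \oo] --> c * dotv d d.
Proof.
move=> t0 s_gt0 s0 tsc wkw; have wc := vcvg_coord wkw.
have dc i : d i 0 @[k --> \oo] --> d i 0 by exact: cvg_cst.
have -> : c * dotv d d = c * dotv d d + 2 * 0 * dotv d w + 0 * dotv w w by ring.
apply: (cvg_trans _ (cvgD (cvgD (cvgM tsc (cvg_cst (dotv d d)))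
                (cvgM (cvgM (cvg_cst (2 : R)) t0) (cvg_dotv dc wc)))
             (cvgM s0 (cvg_dotv wc wc)))).
apply: near_eq_cvg; near=> k; rewrite /GRing.mul_fun !fctE /= enorm_sq.
rewrite !(dotvDl, dotvDr, dotvZl, dotvZr) (dotvC (wk k) d).
by field; rewrite gt_eqF.
Unshelve. all: by end_near. Qed.

End Sequences.

Section Taylor.
Variable R : realType.

Lemma is_derive_eps (F : R -> R) (s D : R) :
  (forall e, 0 < e -> exists2 r, 0 < r &
     forall u, `|u| < r -> `|F (s + u) - F s - u * D| <= e * `|u|) ->
  is_derive s 1 F D.
Proof.
move=> FD.
have quot : h^-1 *: ((F \o shift s) (h *: 1) - F s) @[h --> 0^'] --> D.
  apply/cvgrPdist_le => e /FD[r r0 Fr]; near=> u.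
  have u0 : u != 0 by near: u; exact: nbhs_dnbhs_neq.
  have -> : D - u^-1 *: ((F \o shift s) (u *: 1) - F s) =
      - u^-1 * (F (s + u) - F s - u * D).
    by rewrite /GRing.scale /= mulr1 (addrC u); field.
  rewrite normrM normrN normfV ler_pdivrMl ?normr_gt0 // mulrC (mulrC D) [_ * e]mulrC.
  by apply: Fr; near: u; exact: dnbhs0_lt.
by apply: DeriveDef; [exact: cvgP quot | exact: cvg_lim quot].
Unshelve. all: by end_near. Qed.

Variables (n : nat) (f : 'cV[R]_n -> R) (gf : 'cV[R]_n -> 'cV[R]_n) (hf : 'cV[R]_n -> 'M[R]_n).
Hypothesis fC2 : C2_with f gf hf.

Lemma C2_derive_line (x h : 'cV[R]_n) (s : R) :
  is_derive s 1 (fun s => f (x + s *: h)) (dotv (gf (x + s *: h)) h).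
Proof.
have [fD _ _] := fC2; apply: is_derive_eps => e e0.
have h1 : 0 < enorm h + 1 by rewrite ltr_pwDr ?enorm_ge0.
have [r r0 fr] := fD (x + s *: h) (e / (enorm h + 1)) (divr_gt0 e0 h1).
exists (r / (enorm h + 1)) => [|u]; first exact: divr_gt0.
rewrite ltr_pdivlMr // => ur.
have := fr (x + s *: h + u *: h).
rewrite addrAC subrr add0r enormZ dotvZr scalerDl addrA (mulrC u).
have uh : `|u| * enorm h <= `|u| * (enorm h + 1) by rewrite ler_wpM2l ?lerDl.
move/(_ (le_lt_trans uh ur))/le_trans; apply.
rewrite mulrAC ler_pdivrMr // -mulrA ler_wpM2l ?(ltW e0) //.
Qed.

Lemma taylor2_remainder (x : 'cV[R]_n) (e : R) : 0 < e ->
  exists2 r, 0 < r & forall h, enorm h < r ->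
    `|f (x + h) - f x - dotv (gf x) h - 2^-1 * quad (hf x) h| <= e * enorm h ^+ 2.
Proof.
move=> e0; have [_ gD _] := fC2; have [r r0 gr] := gD x e e0.
exists r => // h hr.
pose G := dotv (gf x) h; pose q := quad (hf x) h.
pose phi (s : R) := f (x + s *: h) - s * G - 2^-1 * s ^+ 2 * q.
have phiD (s : R) : is_derive s 1 phi (dotv (gf (x + s *: h)) h - G - s * q).
  have fD := C2_derive_line x h s; apply: is_derive_eq.
  by rewrite /GRing.scale /= !mulr0 !add0r !mulr1; field.
have phi_cont : {within `[0, 1], continuous phi}.
  by apply: derivable_within_continuous => s _; case: (phiD s).
have [c c01 phi10] := MVT_segment ler01 (fun s _ => phiD s) phi_cont.
have -> : f (x + h) - f x - G - 2^-1 * q = phi 1 - phi 0.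
  by rewrite /phi scale1r scale0r addr0; ring.
rewrite phi10 subr0 mulr1.
have -> : dotv (gf (x + c *: h)) h - G - c * q =
    dotv (gf (x + c *: h) - gf x - hf x *m (c *: h)) h.
  by rewrite !dotvBl -scalemxAr dotvZl (dotvC (hf x *m h)) /q quadE.
apply: le_trans (dotv_norm_le _ _) _.
have c1 : `|c| <= 1 by move: c01; rewrite in_itv /= => /andP[c0 c1]; rewrite ger0_norm.
have ch : `|c| * enorm h <= enorm h by rewrite ler_piMl ?enorm_ge0.
have := gr (x + c *: h); rewrite addrAC subrr add0r enormZ.
move/(_ (le_lt_trans ch hr)) => gb.
rewrite expr2 mulrA ler_wpM2r ?enorm_ge0 //; apply: le_trans gb _.
by rewrite ler_wpM2l ?(ltW e0).
Qed.

Lemma cvg_second_order_quotient (x d w : 'cV[R]_n) (t s : nat -> R)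
    (wk : nat -> 'cV[R]_n) (c : R) :
  t k @[k --> \oo] --> 0 -> (forall k, 0 < s k) -> s k @[k --> \oo] --> 0 ->
  t k ^+ 2 / s k @[k --> \oo] --> c -> vcvg wk w ->
  (f (x + (t k *: d + s k *: wk k)) - f x - t k * dotv (gf x) d) / s k @[k --> \oo]
    --> dotv (gf x) w + 2^-1 * c * quad (hf x) d.
Proof.
move=> t0 s_gt0 s0 tsc wkw.
have wc := vcvg_coord wkw.
have cst (v : 'cV[R]_n) i : v i 0 @[k --> \oo] --> v i 0 by exact: cvg_cst.
pose h k := t k *: d + s k *: wk k.
have ratio := cvg_sqr_enorm_comb_ratio (d := d) t0 s_gt0 s0 tsc wkw.
have h0 : enorm (h k) ^+ 2 @[k --> \oo] --> 0.
  rewrite -(mul0r (c * dotv d d)); apply: (cvg_trans _ (cvgM s0 ratio)).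
  by apply: near_eq_cvg; near=> k; rewrite /GRing.mul_fun /= mulrC divfK ?gt_eqF.
pose rem k := f (x + h k) - f x - dotv (gf x) (h k) - 2^-1 * quad (hf x) (h k).
have rem0 : rem k / s k @[k --> \oo] --> 0.
  apply: (cvg_dominated0 ratio) => e e0.
  have [r r0 fr] := taylor2_remainder x e0.
  have : \forall k \near \oo, enorm (h k) ^+ 2 < r ^+ 2.
    by apply: (cvgr_lt _ h0); rewrite exprn_gt0.
  apply: filterS => k hr.
  rewrite normrM normfV (gtr0_norm (s_gt0 k)) mulrA ler_wpM2r ?invr_ge0 ?(ltW (s_gt0 k)) //.
  by apply: fr; rewrite -(ltr_pXn2r (_ : (0 < 2)%N)) ?nnegrE ?enorm_ge0 ?ltW.
have -> : dotv (gf x) w + 2^-1 * c * quad (hf x) d =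
    dotv (gf x) w + 2^-1 * c * quad (hf x) d
    + 2^-1 * 0 * (dotv d (hf x *m w) + dotv w (hf x *m d))
    + 2^-1 * 0 * dotv w (hf x *m w) + 0 by ring.
apply: (cvg_trans _ (cvgD (cvgD (cvgD (cvgD (cvg_dotv (cst (gf x)) wc)
          (cvgM (cvgM (cvg_cst (2^-1 : R)) tsc) (cvg_cst (quad (hf x) d))))
          (cvgM (cvgM (cvg_cst (2^-1 : R)) t0)
             (cvgD (cvg_dotv (cst d) (cvg_mulmx (A := hf x) wc))
                   (cvg_dotv wc (cst (hf x *m d))))))
          (cvgM (cvgM (cvg_cst (2^-1 : R)) s0) (cvg_dotv wc (cvg_mulmx (A := hf x) wc))))
        rem0)).
apply: near_eq_cvg; near=> k; rewrite /GRing.mul_fun !fctE /=.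
rewrite /rem /h quad_comb !quadE dotvDr !dotvZr.
by field; rewrite gt_eqF.
Unshelve. all: by end_near. Qed.

End Taylor.

Section Proximal.
Variables (R : realType) (n : nat).
Implicit Types (S : set 'cV[R]_n) (x y v : 'cV[R]_n).

Lemma le_dist S y (L : R) : S !=set0 ->
  (forall a, S a -> L <= enorm (y - a)) -> L <= dist y S.
Proof.
move=> [a Sa] yS; apply: lb_le_inf; first by exists (enorm (y - a)), a.
by move=> _ [b Sb <-]; exact: yS.
Qed.

Lemma prox_normal0 S x : prox_normal S x 0.
Proof. by exists 1 => // a _; rewrite scaler0 addr0 subrr /enorm dotv0r sqrtr0 enorm_ge0. Qed.

Lemma eps_prox_normal_approx (eps rho : R) S x d : 0 < rho ->
  eps_prox_normal eps S x d ->
  exists2 v, prox_normal S x v & enorm (d - v) < eps * enorm d + rho.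
Proof.
move=> rho0 dN.
have nonempty : [set enorm (d - a) | a in prox_normal S x] !=set0.
  by exists (enorm (d - 0)), 0 => //; exact: prox_normal0.
have /(inf_lt nonempty)[_ [v Nv <-] dv] : dist d (prox_normal S x) < eps * enorm d + rho.
  by apply: le_lt_trans dN _; rewrite ltrDl.
by exists v.
Qed.

Lemma prox_normal_dist_lb S x v : S !=set0 -> prox_normal S x v ->
  exists2 tau : R, 0 < tau & forall t y, 0 < t -> t <= tau ->
    t * enorm v - enorm (y - (x + t *: v)) <= dist y S.
Proof.
move=> S0 [tau tau0 near_x]; exists tau => // t y t0 t_tau.
apply: le_dist => // a Sa.
have e1 : x + tau *: v - a = (x + t *: v - a) + (tau - t) *: v.
  by apply/matrixP => i j; rewrite !mxE; ring.
have e2 : x + t *: v - a = (y - a) + - (y - (x + t *: v)).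
  by apply/matrixP => i j; rewrite !mxE; ring.
have := near_x a Sa; rewrite addrAC subrr add0r e1 enormZ gtr0_norm //.
have := enormD (x + t *: v - a) ((tau - t) *: v).
have := enormD (y - a) (- (y - (x + t *: v))).
rewrite -e2 enormN enormZ ger0_norm ?subr_ge0 //; lra.
Qed.

End Proximal.

Lemma le_of_forall_subr (R : realType) (a b C : R) : 0 <= C ->
  (forall r, 0 < r -> b - r * C <= a) -> b <= a.
Proof.
move=> C0 ab; apply/ler_addgt0Pr => e e0.
have C1 : 0 < C + 1 by rewrite ltr_pwDr.
have := ab (e / (C + 1)) (divr_gt0 e0 C1).
have : e / (C + 1) * C <= e by rewrite mulrAC ler_pdivrMr // ler_wpM2l ?(ltW e0) // lerDl.
lra.
Qed.

Lemma enorm_comb_le (R : realType) n (t s U : R) (d u : 'cV[R]_n) :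
  0 <= t -> 0 <= s -> enorm u <= U ->
  enorm (t *: d + s *: u) <= t * enorm d + s * U.
Proof.
move=> t0 s0 uU; apply: (le_trans (enormD _ _)); rewrite !enormZ !ger0_norm //.
by rewrite lerD2l ler_wpM2l.
Qed.

Lemma sqr_lb (R : realType) (X t D b : R) : 0 <= X -> 0 < t -> 0 <= D -> 0 <= b ->
  t * (D - b) <= X -> t ^+ 2 * (D ^+ 2 - 2 * D * b) <= X ^+ 2.
Proof.
move=> X0 t0 D0 b0 tX.
have [Db|bD] := lerP b D.
  have : (t * (D - b)) ^+ 2 <= X ^+ 2.
    have : 0 <= t * (D - b) by apply: mulr_ge0; [exact: ltW | rewrite subr_ge0].
    nra.
  apply: le_trans; rewrite exprMn ler_wpM2l ?sqr_ge0 //; nra.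
apply: le_trans (sqr_ge0 X); rewrite mulr_ge0_le0 ?sqr_ge0 //; nra.
Qed.

Lemma sharp_quotient_lb (R : realType) (kappa t X D b fx fy g : R) :
  0 < kappa -> 0 < t -> 0 <= X -> 0 <= D -> 0 <= b -> g <= 0 ->
  t * (D - b) <= X -> fx + kappa * X ^+ 2 <= fy ->
  2 * kappa * (D ^+ 2 - 2 * D * b) <= (fy - fx - t * g) / (2^-1 * t ^+ 2).
Proof.
move=> k0 t0 X0 D0 b0 g0 tX sharp.
have := ler_wpM2l (ltW k0) (sqr_lb X0 t0 D0 b0 tX).
have := mulr_ge0_le0 (ltW t0) g0.
rewrite ler_pdivlMr ?mulr_gt0 ?invr_gt0 ?exprn_gt0 //; lra.
Qed.

Lemma dist_curve_lb (R : realType) n (S : set 'cV[R]_n) (x d v u : 'cV[R]_n)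
    (t tau eps rho U : R) :
  (forall t y, 0 < t -> t <= tau -> t * enorm v - enorm (y - (x + t *: v)) <= dist y S) ->
  enorm (d - v) < eps * enorm d + rho -> 0 < t -> t <= tau -> enorm u <= U ->
  t * ((1 - 2 * eps) * enorm d - (2 * rho + 2^-1 * t * U)) <=
    dist (x + (t *: d + (2^-1 * t ^+ 2) *: u)) S.
Proof.
move=> distS dv t0 t_tau uU.
apply: le_trans (distS t _ t0 t_tau).
have -> : x + (t *: d + (2^-1 * t ^+ 2) *: u) - (x + t *: v) =
    t *: (d - v) + (2^-1 * t ^+ 2) *: u.
  by apply/matrixP => i j; rewrite !mxE; ring.
have s0 : 0 <= 2^-1 * t ^+ 2 by apply: mulr_ge0; rewrite ?invr_ge0 ?sqr_ge0.
have := enorm_comb_le (d - v) (ltW t0) s0 uU.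
have dv' : t * enorm (d - v) <= t * (eps * enorm d + rho) by rewrite ler_wpM2l ?(ltW t0) // ltW.
have vd : t * (enorm d - enorm (d - v)) <= t * enorm v.
  by rewrite ler_wpM2l ?(ltW t0) // -{2}(subKr d v) enormB.
nra.
Qed.

Section SecondOrderConditions.
Variables (R : realType) (n : nat) (f : 'cV[R]_n -> R).
Variables (gf : 'cV[R]_n -> 'cV[R]_n) (hf : 'cV[R]_n -> 'M[R]_n).
Hypothesis fC2 : C2_with f gf hf.

Lemma tangent2_asym_grad_ge0 (Phi : set 'cV[R]_n) x d w :
  (forall y, Phi y -> f x <= f y) -> dotv (gf x) d <= 0 ->
  tangent2_asym Phi x d w -> 0 <= dotv (gf x) w.
Proof.
move=> xmin gd [t [r [wk [[t_gt0 /rcvg0_cvg t0] [r_gt0 /rcvg0_cvg r0] /rcvg0_cvg tr0 wkw y_Phi]]]].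
pose s k := 2^-1 * t k * r k.
have s_gt0 k : 0 < s k by rewrite !mulr_gt0 ?invr_gt0.
have s0 : s k @[k --> \oo] --> 0.
  by rewrite -(mulr0 (2^-1 * 0)); exact: cvgM (cvgM (cvg_cst _) t0) r0.
have ts0 : t k ^+ 2 / s k @[k --> \oo] --> 0.
  rewrite -(mulr0 (2 : R)); apply: (cvg_trans _ (cvgM (cvg_cst (2 : R)) tr0)).
  apply: near_eq_cvg; near=> k; rewrite /GRing.mul_fun /= /s.
  by field; rewrite !gt_eqF.
have := cvg_second_order_quotient fC2 (x := x) (d := d) t0 s_gt0 s0 ts0 wkw.
rewrite mulr0 mul0r addr0 => /cvgr_to_ge; apply; near=> k.
rewrite divr_ge0 ?(ltW (s_gt0 k)) // subr_ge0 (@le_trans _ _ 0) //.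
  by rewrite mulr_ge0_le0 ?(ltW (t_gt0 k)).
by rewrite subr_ge0 addrA xmin.
Unshelve. all: by end_near. Qed.

Lemma cvg_tangent2_quotient x d w (t : nat -> R) (wk : nat -> 'cV[R]_n) :
  (forall k, 0 < t k) -> t k @[k --> \oo] --> 0 -> vcvg wk w ->
  (f (x + (t k *: d + (2^-1 * t k ^+ 2) *: wk k)) - f x - t k * dotv (gf x) d)
    / (2^-1 * t k ^+ 2) @[k --> \oo] --> dotv (gf x) w + quad (hf x) d.
Proof.
move=> t_gt0 t0 wkw.
have s_gt0 k : 0 < 2^-1 * t k ^+ 2 by rewrite mulr_gt0 ?invr_gt0 ?exprn_gt0.
have ts2 : t k ^+ 2 / (2^-1 * t k ^+ 2) @[k --> \oo] --> (2 : R).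
  have -> : (fun k => t k ^+ 2 / (2^-1 * t k ^+ 2)) = fun=> 2.
    by apply/funext => k; field; rewrite gt_eqF.
  exact: cvg_cst.
have := cvg_second_order_quotient fC2 (x := x) (d := d) t0 s_gt0 (cvg_half_sqr0 t0) ts2 wkw.
by rewrite mulVf ?pnatr_eq0 // mul1r.
Qed.

Lemma tangent2_second_order_lb (S Phi : set 'cV[R]_n) (x xbar d w : 'cV[R]_n)
    (kappa delta eps : R) :
  0 < kappa -> S !=set0 -> 0 <= eps -> eps < 2^-1 ->
  (forall y, Phi y -> enorm (y - xbar) < delta -> f x + kappa * dist y S ^+ 2 <= f y) ->
  enorm (x - xbar) < delta -> dotv (gf x) d <= 0 ->
  eps_prox_normal eps S x d -> tangent2 Phi x d w ->
  2 * kappa * (1 - 2 * eps) ^+ 2 * enorm d ^+ 2 <= dotv (gf x) w + quad (hf x) d.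
Proof.
move=> k0 S0 eps0 eps1 sharp xb gd dN [t [wk [[t_gt0 /rcvg0_cvg t0] wkw y_Phi]]].
have quot := cvg_tangent2_quotient (x := x) (d := d) t_gt0 t0 wkw.
pose D := (1 - 2 * eps) * enorm d; pose U := enorm w + 1; pose s k := 2^-1 * t k ^+ 2.
have D0 : 0 <= D by apply: mulr_ge0; [lra | exact: enorm_ge0].
have -> : 2 * kappa * (1 - 2 * eps) ^+ 2 * enorm d ^+ 2 = 2 * kappa * D ^+ 2.
  by rewrite /D; ring.
apply: (@le_of_forall_subr _ _ _ (8 * kappa * D)) => [|rho rho0].
  exact: mulr_ge0 (mulr_ge0 (ler0n _ 8) (ltW k0)) D0.
have [v vN dv] := eps_prox_normal_approx rho0 dN.
have [tau tau0 distS] := prox_normal_dist_lb S0 vN.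
pose b k := 2 * rho + 2^-1 * t k * U.
have lb : 2 * kappa * (D ^+ 2 - 2 * D * b k) @[k --> \oo] -->
    2 * kappa * (D ^+ 2 - 2 * D * (2 * rho + 2^-1 * 0 * U)).
  exact: cvgM (cvg_cst _) (cvgB (cvg_cst _) (cvgM (cvg_cst _)
    (cvgD (cvg_cst _) (cvgM (cvgM (cvg_cst _) t0) (cvg_cst _))))).
apply: le_trans (ler_cvg_to lb quot _); first by rewrite !(mulr0, mul0r, addr0); lra.
have step0 : t k * enorm d + s k * U @[k --> \oo] --> 0.
  have -> : 0 = 0 * enorm d + 0 * U :> R by rewrite !mul0r addr0.
  exact: cvgD (cvgM t0 (cvg_cst _)) (cvgM (cvg_half_sqr0 t0) (cvg_cst _)).
near=> k.
have tk := t_gt0 k.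
have wkU : enorm (wk k) <= U.
  have := enormD (wk k - w) w; rewrite subrK => /le_trans; apply.
  rewrite addrC lerD2l ltW //; near: k; exact: vcvg_near wkw ltr01.
set y := x + (t k *: d + s k *: wk k).
have y_ball : enorm (y - xbar) < delta.
  have sk : 0 <= s k by apply: mulr_ge0; rewrite ?invr_ge0 ?sqr_ge0.
  have := enorm_comb_le d (ltW tk) sk wkU.
  have := enormD (x - xbar) (t k *: d + s k *: wk k).
  have : t k * enorm d + s k * U < delta - enorm (x - xbar).
    by near: k; apply: (cvgr_lt _ step0); rewrite subr_gt0.
  rewrite /y addrAC; lra.
have dist_y : t k * (D - b k) <= dist y S.
  apply: dist_curve_lb distS dv tk _ wkU.
  by near: k; apply: (cvgr_le _ t0).
have b0 : 0 <= b k by rewrite /b /U; have := enorm_ge0 w; nra.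
apply: sharp_quotient_lb k0 tk (le_dist S0 (fun a _ => enorm_ge0 _)) D0 b0 gd dist_y _.
by apply: sharp _ _ y_ball; rewrite /y addrA; exact: y_Phi.
Unshelve. all: by end_near. Qed.

End SecondOrderConditions.

Unset Implicit Arguments. Set Strict Implicit. Set Printing Implicit Defensive.

Theorem theorem3p2 (R : realType) (n m : nat)
    (f : 'cV[R]_n -> R) (gradf : 'cV[R]_n -> 'cV[R]_n) (hessf : 'cV[R]_n -> 'M[R]_n)
    (g : 'cV[R]_n -> 'cV[R]_m) (Jg : 'cV[R]_n -> 'M[R]_(m, n))
    (hessg : 'I_m -> 'cV[R]_n -> 'M[R]_n)
    (K : set 'cV[R]_m) :
  C2_with f gradf hessf ->
  (forall i : 'I_m, C2_with (fun x => g x i 0) (fun x => (row i (Jg x))^T) (hessg i)) ->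
  closed K ->
  let Phi := [set x | K (g x)] in
  let S := [set x | Phi x /\ forall y, Phi y -> f x <= f y] in
  S !=set0 ->
  forall (xbar : 'cV[R]_n) (kappa delta : R), 0 < kappa -> 0 < delta ->
  (* xbar is a local second-order weak sharp minimizer with constants kappa, delta *)
  Phi xbar ->
  (forall x, Phi x -> Eball xbar delta x -> f x >= f xbar + kappa * dist x S ^+ 2) ->
  forall (eps : R), 0 <= eps -> eps < 2^-1 ->
  forall (x : 'cV[R]_n), S x -> Eball xbar delta x ->
  forall (d : 'cV[R]_n),
    (* d in the critical cone C(x) *)
    tangent_cone K (g x) (Jg x *m d) -> dotv (gradf x) d <= 0 ->
    eps_prox_normal eps S x d ->
  forall (lam : 'cV[R]_m),
    (* grad_x L(x, lam) = 0 *)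
    gradf x + (Jg x)^T *m lam = 0 ->
    ((support_fun ([set Jg x *m w | w in tangent2_asym Phi x d])%R lam <= 0)%E /\
     ((quad (hessf x) d + \sum_(i < m) lam i 0 * quad (hessg i x) d)%:E
        - support_fun ([set Jg x *m w + \col_(i < m) quad (hessg i x) d
                      | w in tangent2 Phi x d])%R lam
      >= (2 * kappa * (1 - 2 * eps) ^+ 2 * enorm d ^+ 2)%:E)%E).
Proof.
move=> fC2 _ _ Phi S S0 xbar kappa delta k0 _ xbar_Phi sharp eps eps0 eps1
  x [_ x_min] xb d _ gd dN lam KKT.
have dotL (w : 'cV[R]_n) : dotv lam (Jg x *m w) = - dotv (gradf x) w.
  have Jlam : (Jg x)^T *m lam = - gradf x by apply/eqP; rewrite -addr_eq0 addrC KKT.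
  by rewrite dotv_trmx Jlam -scaleN1r dotvZl mulN1r.
split.
  apply: ge_ereal_sup => _ [_ [w Tw <-] <-].
  by rewrite lee_fin dotL oppr_le0; exact: (tangent2_asym_grad_ge0 fC2 x_min gd Tw).
have sharp_x y : Phi y -> enorm (y - xbar) < delta -> f x + kappa * dist y S ^+ 2 <= f y.
  by move=> y_Phi y_ball; have := sharp y y_Phi y_ball; have := x_min xbar xbar_Phi; lra.
set Q := quad (hessf x) d + \sum_(i < m) lam i 0 * quad (hessg i x) d.
set B := 2 * kappa * (1 - 2 * eps) ^+ 2 * enorm d ^+ 2.
have sup_le : (support_fun [set Jg x *m w + \col_(i < m) quad (hessg i x) d
    | w in tangent2 Phi x d]%R lam <= (Q - B)%:E)%E.
  apply: ge_ereal_sup => _ [_ [w Tw <-] <-].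
  rewrite lee_fin dotvDr dotL.
  have -> : dotv lam (\col_(i < m) quad (hessg i x) d) = \sum_(i < m) lam i 0 * quad (hessg i x) d.
    by apply: eq_bigr => i _; rewrite mxE.
  have := tangent2_second_order_lb fC2 k0 S0 eps0 eps1 sharp_x xb gd dN Tw.
  rewrite /Q /B; lra.
have -> : B%:E = (Q%:E - (Q - B)%:E)%E by rewrite -EFinB opprB addrC subrK.
exact: leeB.
Qed.
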